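(* Let $U_3=(\mathbb{N},F_3)$ where $F_3=\{l_i:i\in\mathbb{N}\setminus\{0\}\}$ and, for $i\ge 1$, $j\in\mathbb{N}$, $l_i(j)=0$ if $j\le i$ and $l_i(j)=1$ if $j>i$. Then $\operatorname{typ}_u(Tab(U_3),h)=t_3$, where $h$ is the depth and $t_3$ is the table with rows (indexed $i,d,a$; entries in columns $i,d,a$) $(\gamma,\epsilon,\epsilon)$, $(\beta,\gamma,\epsilon)$, $(\alpha,\alpha,\alpha)$.
   Context: Let $\mathbb{N}=\{0,1,2,\dots\}$; for $k\ge 2$, $E_k=\{0,\dots,k-1\}$; $\mathcal{P}(\mathbb{N})$ is the set of nonempty finite subsets of $\mathbb{N}$. For a nonempty set $F$, a decision table $T\in\mathcal{M}_k(F)$ is a rectangular table with $n\ge1$ columns labeled with attributes $f_1,\dots,f_n\in F$ (columns with the same label are equal), whose rows are pairwise different tuples in $E_k^n$ (possibly none), each row labeled with a set from $\mathcal{P}(\mathbb{N})$; $At(T)=\{f_1,\dots,f_n\}$, $\Delta(T)$ the set of rows; for a word $\alpha=(f_{i_1},\delta_1)\cdots(f_{i_m},\delta_m)$, $T\alpha$ is the subtable of rows with value $\delta_j$ in column $f_{i_j}$ for all $j$. Information system: $U=(A,F)$ with $A$ nonempty and $F$ a nonempty set of functions $A\to E_k$ (here $k=2$). A problem over $U$ is $z=(\nu,f_1,\dots,f_n)$ with $n\ge1$, $\nu:E_k^n\to\mathcal{P}(\mathbb{N})$, $f_1,\dots,f_n\in F$. Its table $T(z)\in\mathcal{M}_k(F)$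 has columns labeled $f_1,\dots,f_n$; $\bar\delta\in E_k^n$ is a row iff there is $x\in A$ with $f_j(x)=\delta_j$ for all $j$, and it is labeled $\nu(\bar\delta)$. $Tab(U)=\{T(z): z \text{ a problem over } U\}$ (a closed class, i.e. closed under removal of columns (keeping the first of equal rows), arbitrary changing of decision sets, permutation and duplication of columns). Decision trees over $\mathcal{M}_k(F)$: finite rooted directed trees with at least two nodes; root and edges leaving the root unlabeled; worker nodes (neither root nor terminal) labeled by attributes in $F$; edges leaving worker nodes labeled by elements of $E_k$; terminal nodes labeled by numbers in $\mathbb{N}$. For a complete path $\xi$, $\pi(\xi)$ is the word of pairs (attribute of worker node, label of leaving edge) along $\xi$, $\varphi(\xi)$ the word of those attributes, $\tau(\xi)$ the terminal label. A nondeterministic decision tree for $T$ uses only attributes in $At(T)$, satisfies $\bigcup_\xi\Delta(T\pi(\xi))=\Delta(T)$, and for every row $r\in\Delta(T\pi(\xi))$, $\tau(\xi)$ lies in the decision set of $r$. It is deterministic if exactly one edge leaves the root and edges leaving each worker node have distinct labels. The depth of a word is its length $h(\alpha)=|\alpha|$; $h(\Gamma)=\max_\xi h(\varphi(\xi))$. For $T$ with columns $f_1,\dots,f_n$: $h^i(T)=n$, $h^d(T)$ and $h^a(T)$ are the minimum depths of deterministic, respectively nondeterministic, decision trees for $T$. For $b,c\in\{i,d,a\}$ and a class $\mathcal{C}$, $\mathcal{U}^{bc}_{\mathcal{C}h}(n)=\max\{h^b(T):T\in\mathcal{C},h^c(T)\le n\}$ (defined iff this set is nonempty and finite). For a partial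 $g:\mathbb{N}\to\mathbb{N}$, $\mathrm{Dom}^+(g)=\{n\in\mathrm{Dom}(g):g(n)\ge n\}$, $\mathrm{Dom}^-(g)=\{n\in\mathrm{Dom}(g):g(n)\le n\}$; $\operatorname{typ}(g)$ is $\alpha$ if $\mathrm{Dom}(g)$ is infinite and $g$ bounded above; $\beta$ if $\mathrm{Dom}(g)$ infinite, $\mathrm{Dom}^+(g)$ finite, $g$ unbounded; $\gamma$ if $\mathrm{Dom}^+(g)$ and $\mathrm{Dom}^-(g)$ are infinite; $\delta$ if $\mathrm{Dom}(g)$ infinite and $\mathrm{Dom}^-(g)$ finite; $\epsilon$ if $\mathrm{Dom}(g)$ finite. $\operatorname{typ}_u(\mathcal{C},h)$ is the $3\times3$ table (rows and columns indexed $i,d,a$) with entry $\operatorname{typ}(\mathcal{U}^{bc}_{\mathcal{C}h})$ in row $b$, column $c$. *)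

(* decision tables and decision trees over an
   information system with k = 2 (E_2 = bool, false = 0, true = 1). *)
From Stdlib Require List.
From mathcomp Require Import all_boot.
Set Implicit Arguments.
Unset Strict Implicit.
Unset Printing Implicit Defensive.

(* General information system U = (X, F): attributes are the elements *)
(* of a type [Att], evaluated by [ev : Att -> X -> bool].               *)
Section DecisionTrees.
Variables (X Att : Type) (ev : Att -> X -> bool).

(* A non-root node of a decision tree: a terminal node labelled by a
   number, or a worker node labelled by an attribute with a list of
   outgoing edges (edge label, subtree). *)
Inductive dnode : Type :=
  | Leaf of nat
  | Node of Att & seq (bool * dnode).

(* A decision tree is given by its root, i.e. the list of the subtrees
   hanging from the (unlabelled) edges leaving the root. *)
Definition dtree := seq dnode.

(* complete paths from a node: (pi(xi), tau(xi)) *)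
Fixpoint npaths (t : dnode) : seq (seq (Att * bool) * nat) :=
  match t with
  | Leaf d => [:: ([::], d)]
  | Node f ch =>
      (fix aux (ch : seq (bool * dnode)) :=
         match ch with
         | [::] => [::]
         | (b, c) :: ch' =>
             map (fun p => ((f, b) :: p.1, p.2)) (npaths c) ++ aux ch'
         end) ch
  end.

Definition paths (G : dtree) := flatten (map npaths G).

Definition depth (G : dtree) : nat :=
  foldr maxn 0 (map (fun p => size p.1) (paths G)).

(* well-formedness of the nodes: worker nodes have at least one outgoing
   edge (otherwise they would be terminal), their attributes satisfy P,
   and, if [detm], the edges leaving each worker node have distinct labels *)
Fixpoint node_ok (P : Att -> Prop) (detm : bool) (t : dnode) : Prop :=
  match t with
  | Leaf _ => True
  | Node f ch =>
      P f /\ ch <> [::] /\ (detm -> uniq (map fst ch)) /\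
      (fix aux (ch : seq (bool * dnode)) : Prop :=
         match ch with
         | [::] => True
         | (_, c) :: ch' => node_ok P detm c /\ aux ch'
         end) ch
  end.

(* The table T(z) of the problem z = (nu, fs): its rows are the tuples
   (f_1 x, ..., f_n x), x in X, the row delta being labelled nu delta. *)
Definition rowof (fs : seq Att) (x : X) : seq bool := map (fun f => ev f x) fs.
Definition is_row (fs : seq Att) (delta : seq bool) := exists x, delta = rowof fs x.
Definition sat (x : X) (alpha : seq (Att * bool)) :=
  forall p, List.In p alpha -> ev p.1 x = p.2.
(* delta is a row of the subtable T(z) alpha (attributes of alpha lie in At(T)) *)
Definition in_sub (fs : seq Att) (alpha : seq (Att * bool)) (delta : seq bool) :=
  exists x, delta = rowof fs x /\ sat x alpha.

Definition is_tree_for (detm : bool) (fs : seq Att) (nu : seq bool -> seq nat)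
    (G : dtree) : Prop :=
  G <> [::] /\ (detm -> size G = 1) /\
  (forall t, List.In t G -> node_ok (fun f => List.In f fs) detm t) /\
  (forall delta, is_row fs delta ->
     exists xi, List.In xi (paths G) /\ in_sub fs xi.1 delta) /\
  (forall xi delta, List.In xi (paths G) -> in_sub fs xi.1 delta ->
     xi.2 \in nu delta).

Definition h_min (detm : bool) fs nu (m : nat) : Prop :=
  (exists G, is_tree_for detm fs nu G /\ depth G = m) /\
  (forall G, is_tree_for detm fs nu G -> m <= depth G).

(* z = (nu, f_1, ..., f_n) is a problem over U: n >= 1 and nu maps
   E_2^n to nonempty finite sets of naturals (given as lists) *)
Definition problem (fs : seq Att) (nu : seq bool -> seq nat) : Prop :=
  fs <> [::] /\ forall delta, size delta = size fs -> nu delta <> [::].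

Inductive hkind := HI | HD | HA.

(* hval b fs nu m  <->  h^b(T(z)) = m *)
Definition hval (b : hkind) fs nu (m : nat) : Prop :=
  match b with
  | HI => m = size fs
  | HD => h_min true fs nu m
  | HA => h_min false fs nu m
  end.

(* S b c n = { h^b(T) : T in Tab(U), h^c(T) <= n } *)
Definition Sset (b c : hkind) (n w : nat) : Prop :=
  exists fs nu, problem fs nu /\ hval b fs nu w /\
    exists m, hval c fs nu m /\ m <= n.

(* graph of the partial function U^{bc}_{Tab(U) h}:
   defined at n iff S is nonempty and finite, with value its maximum *)
Definition Ufun (b c : hkind) (n v : nat) : Prop :=
  (exists w, Sset b c n w) /\
  (exists B, forall w, Sset b c n w -> w < B) /\
  Sset b c n v /\ (forall w, Sset b c n w -> w <= v).

End DecisionTrees.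

(* Types of partial functions nat -> nat (given by their graphs)        *)
Definition pfun := nat -> nat -> Prop.
Definition nat_infinite (P : nat -> Prop) := forall m, exists n, m <= n /\ P n.
Definition nat_finite (P : nat -> Prop) := exists m, forall n, P n -> n < m.
Definition Dom (g : pfun) (n : nat) := exists v, g n v.
Definition Dom_plus (g : pfun) (n : nat) := exists v, g n v /\ n <= v.
Definition Dom_minus (g : pfun) (n : nat) := exists v, g n v /\ v <= n.
Definition bounded_above (g : pfun) := exists B, forall n v, g n v -> v <= B.

Inductive typ := Talpha | Tbeta | Tgamma | Tdelta | Teps.

Definition has_typ (g : pfun) (t : typ) : Prop :=
  match t with
  | Talpha => nat_infinite (Dom g) /\ bounded_above g
  | Tbeta => nat_infinite (Dom g) /\ nat_finite (Dom_plus g) /\ ~ bounded_above g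
  | Tgamma => nat_infinite (Dom_plus g) /\ nat_infinite (Dom_minus g)
  | Tdelta => nat_infinite (Dom g) /\ nat_finite (Dom_minus g)
  | Teps => nat_finite (Dom g)
  end.

Definition l (i j : nat) : bool := i < j.
Definition F3 := {f : nat -> bool | exists i, 0 < i /\ f = l i}.
Definition ev3 (f : F3) (x : nat) : bool := proj1_sig f x.

(* the table t_3 : row b, column c *)
Definition t3 (b c : hkind) : typ :=
  match b, c with
  | HI, HI => Tgamma | HI, HD => Teps | HI, HA => Teps
  | HD, HI => Tbeta  | HD, HD => Tgamma | HD, HA => Teps
  | HA, _ => Talpha
  end.

(* Every attribute of U_3 is a threshold test [l_i x = (i < x)], so a table
   with [n] columns has at most [n + 1] rows, cut out by the thresholds.
   Binary search over the thresholds gives [h^d <= m] as soon as [n < 2 ^ m],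
   and every row is certified by the two nearest thresholds around it, so
   [h^a <= 2].  Conversely a deterministic tree of depth [D] has at most
   [2 ^ D] complete paths, so the table that counts the ones of a row over
   [n] distinct columns has [n < 2 ^ h^d], while tables with a constant
   decision have [h^d = h^a = 0] and any number of columns.  These bounds
   determine each function U^{bc} well enough to read off its type. *)

From Stdlib Require List.
From mathcomp Require Import all_boot zify boolp.
Set Implicit Arguments.
Unset Strict Implicit.
Unset Printing Implicit Defensive.

(** * Types of partial functions *)

Section PartialFunctionTypes.
Variable g : pfun.

Lemma nat_infinite_finite (P : nat -> Prop) : nat_infinite P -> nat_finite P -> False.
Proof. by move=> Pinf [m Pfin]; have [n [le_mn /Pfin]] := Pinf m; lia. Qed.

Lemma nat_infinite_Dom_of_plus : nat_infinite (Dom_plus g) -> nat_infinite (Dom g).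
Proof.
by move=> inf m; have [n [le_mn [v [gnv _]]]] := inf m; exists n; split; last exists v.
Qed.

Lemma nat_infinite_Dom_plus_unbounded : nat_infinite (Dom_plus g) -> ~ bounded_above g.
Proof. by move=> inf [B gB]; have [n [le_Bn [v [/gB le_vB le_nv]]]] := inf B.+1; lia. Qed.

Lemma bounded_nat_finite_Dom_plus : bounded_above g -> nat_finite (Dom_plus g).
Proof. by move=> [B gB]; exists B.+1 => n [v [/gB]]; lia. Qed.

Lemma nat_infinite_Dom_minus :
  nat_infinite (Dom g) -> nat_finite (Dom_plus g) -> nat_infinite (Dom_minus g).
Proof.
move=> inf [B plusB] m; have [n [le_mn [v gnv]]] := inf (maxn m B).
exists n; split; first lia.
exists v; split=> //; rewrite leqNgt; apply/negP => /ltnW le_nv.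
by have := plusB n (ex_intro _ v (conj gnv le_nv)); lia.
Qed.

Lemma nat_infinite_Dom_plus :
  nat_infinite (Dom g) -> nat_finite (Dom_minus g) -> nat_infinite (Dom_plus g).
Proof.
move=> inf [B minusB] m; have [n [le_mn [v gnv]]] := inf (maxn m B).
exists n; split; first lia.
exists v; split=> //; rewrite leqNgt; apply/negP => /ltnW le_vn.
by have := minusB n (ex_intro _ v (conj gnv le_vn)); lia.
Qed.

(* These four facts already tell the five types apart. *)
Lemma has_typ_profile t : has_typ g t ->
  match t with
  | Talpha => [/\ nat_infinite (Dom g), bounded_above g,
                  nat_finite (Dom_plus g) & nat_infinite (Dom_minus g)]
  | Tbeta => [/\ nat_infinite (Dom g), ~ bounded_above g,
                 nat_finite (Dom_plus g) & nat_infinite (Dom_minus g)]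
  | Tgamma => [/\ nat_infinite (Dom g), ~ bounded_above g,
                  nat_infinite (Dom_plus g) & nat_infinite (Dom_minus g)]
  | Tdelta => [/\ nat_infinite (Dom g), ~ bounded_above g,
                  nat_infinite (Dom_plus g) & nat_finite (Dom_minus g)]
  | Teps => nat_finite (Dom g)
  end.
Proof.
case: t => //=.
- move=> [inf bdd]; have plus_fin := bounded_nat_finite_Dom_plus bdd.
  by split=> //; apply: nat_infinite_Dom_minus.
- by move=> [inf [plus_fin unb]]; split=> //; apply: nat_infinite_Dom_minus.
- move=> [plus_inf minus_inf]; split=> //; first exact: nat_infinite_Dom_of_plus.
  exact: nat_infinite_Dom_plus_unbounded.
- move=> [inf minus_fin]; have plus_inf := nat_infinite_Dom_plus inf minus_fin.
  by split=> //; apply: nat_infinite_Dom_plus_unbounded.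
Qed.

Lemma has_typ_unique t t' : has_typ g t -> has_typ g t' -> t = t'.
Proof.
move=> /has_typ_profile Ht /has_typ_profile Ht'.
case: t Ht; case: t' Ht' => //= Ht' Ht; exfalso;
repeat match goal with H : [/\ _, _, _ & _] |- _ => case: H => ? ? ? ? end;
match goal with
| H : nat_infinite ?P, H' : nat_finite ?P |- _ => exact: nat_infinite_finite H H'
| H : bounded_above _, H' : ~ bounded_above _ |- _ => exact: H' H
end.
Qed.

End PartialFunctionTypes.

Lemma has_typ_gamma_of_id (g : pfun) : (forall n, 0 < n -> g n n) -> has_typ g Tgamma.
Proof.
by move=> gid; split=> m; exists m.+1; split=> //; exists m.+1; split=> //; apply: gid.
Qed.

(** * Decision trees *)

Section DecisionTreeFacts.
Variables (X Att : Type) (ev : Att -> X -> bool).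
Implicit Types (t : dnode Att) (G : dtree Att) (fs : seq Att) (nu : seq bool -> seq nat).

Definition cons_edge (f : Att) (b : bool) (p : seq (Att * bool) * nat) :=
  ((f, b) :: p.1, p.2).

Lemma npaths_Node f ch : npaths (Node f ch) =
  flatten [seq [seq cons_edge f bc.1 p | p <- npaths bc.2] | bc <- ch].
Proof. by elim: ch => //= [[b c] ch] ->. Qed.

Lemma In_npaths_Node f ch p : List.In p (npaths (Node f ch)) <->
  exists bc q, [/\ List.In bc ch, List.In q (npaths bc.2) & p = cons_edge f bc.1 q].
Proof.
rewrite npaths_Node; split.
  move=> /List.in_concat [s [/List.in_map_iff [bc [<- bc_ch]]]].
  by move=> /List.in_map_iff [q [<- q_bc]]; exists bc, q.
move=> [bc [q [bc_ch q_bc ->]]]; apply/List.in_concat.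
exists [seq cons_edge f bc.1 p | p <- npaths bc.2].
by split; apply/List.in_map_iff; [exists bc | exists q].
Qed.

Lemma node_ok_Node (P : Att -> Prop) detm f ch : node_ok P detm (Node f ch) <->
  [/\ P f, ch <> [::], (detm -> uniq (map fst ch))
    & forall bc, List.In bc ch -> node_ok P detm bc.2].
Proof.
have children_ok : (fix aux (ch : seq (bool * dnode Att)) : Prop :=
    match ch with
    | [::] => True
    | (_, c) :: ch' => node_ok P detm c /\ aux ch'
    end) ch <-> forall bc, List.In bc ch -> node_ok P detm bc.2.
  elim: ch => [|[b c] ch IH] /=; first by split.
  rewrite IH; split; first by move=> [c_ok ch_ok] bc [<-|]; auto.
  by move=> ok; split=> [|bc bc_ch]; [apply: (ok (b, c)) | apply: ok]; auto.
by rewrite /= children_ok; split=> [[? [? [? ?]]] | []].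
Qed.

Lemma paths1 t : paths [:: t] = npaths t.
Proof. exact: cats0. Qed.

Lemma depth_le G D : (forall p, List.In p (paths G) -> size p.1 <= D) -> depth G <= D.
Proof.
rewrite /depth; elim: (paths G) => //= p ps IH le_D.
by rewrite geq_max le_D ?IH //; auto.
Qed.

Lemma depth_ge G p : List.In p (paths G) -> size p.1 <= depth G.
Proof.
rewrite /depth; elim: (paths G) => //= q ps IH [<-|/IH].
  exact: leq_maxl.
by move/leq_trans; apply; apply: leq_maxr.
Qed.

Lemma sat_cons x f b p : sat ev x ((f, b) :: p) <-> ev f x = b /\ sat ev x p.
Proof.
split=> [satx|[evx satx] q [<-|/satx]] //.
by split=> [|q q_p]; [apply: (satx (f, b)); left | apply: satx; right].
Qed.

Lemma sat_cat x p1 p2 : sat ev x (p1 ++ p2) <-> sat ev x p1 /\ sat ev x p2.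
Proof.
split; first by move=> satx; split=> q q_p; apply: satx; apply/List.in_app_iff; auto.
by move=> [sat1 sat2] q /List.in_app_iff [/sat1|/sat2].
Qed.

(* The edge labels at a deterministic worker node are distinct booleans. *)
Lemma size_npaths_det (P : Att -> Prop) D t : node_ok P true t ->
  (forall p, List.In p (npaths t) -> size p.1 <= D) -> size (npaths t) <= 2 ^ D.
Proof.
elim: D t => [|D IH] [d|f ch] //.
- move=> _ le_0; case E: (npaths (Node f ch)) => [|p ps] //.
  have p_t : List.In p (npaths (Node f ch)) by rewrite E; left.
  have := le_0 _ p_t; case/In_npaths_Node: p_t => [bc [q [_ _ ->]]].
  by [].
- by move=> _ _; rewrite expn_gt0.
move=> /node_ok_Node [_ _ /(_ erefl) uniq_ch ch_ok] le_D.
have size_ch : size ch <= 2.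
  rewrite -(size_map fst); apply: (uniq_leq_size (s2 := [:: true; false])) => //.
  by case.
have child_le bc : List.In bc ch -> size (npaths bc.2) <= 2 ^ D.
  move=> bc_ch; apply: IH; first exact: ch_ok.
  move=> q q_bc; have : size (cons_edge f bc.1 q).1 <= D.+1.
    by apply: le_D; apply/In_npaths_Node; exists bc, q.
  by [].
rewrite npaths_Node size_flatten /shape -map_comp expnS.
apply: leq_trans (leq_mul size_ch (leqnn (2 ^ D))).
elim: ch {uniq_ch ch_ok le_D size_ch} child_le => //= bc ch IHch child_le.
rewrite mulSn size_map leq_add //; first by apply: child_le; left.
by apply: IHch => bc' bc'_ch; apply: child_le; right.
Qed.

Lemma h_min_exists detm fs nu :
  (exists G, is_tree_for ev detm fs nu G) -> exists m, h_min ev detm fs nu m.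
Proof.
move=> [G0 G0_ok].
have has_depth : exists m, `[< exists G, is_tree_for ev detm fs nu G /\ depth G = m >].
  by exists (depth G0); apply/asboolP; exists G0.
case: (ex_minnP has_depth) => m /asboolP m_depth m_min; exists m; split=> // G G_ok.
by apply: m_min; apply/asboolP; exists G.
Qed.

Lemma h_min_le detm fs nu m G :
  h_min ev detm fs nu m -> is_tree_for ev detm fs nu G -> m <= depth G.
Proof. by move=> [_ min]; apply: min. Qed.

Lemma h_min_unique detm fs nu m m' :
  h_min ev detm fs nu m -> h_min ev detm fs nu m' -> m = m'.
Proof.
move=> [[G [G_ok <-]] min] [[G' [G'_ok <-]] min'].
by apply/eqP; rewrite eqn_leq min // min'.
Qed.

Lemma hval_unique b fs nu m m' : hval ev b fs nu m -> hval ev b fs nu m' -> m = m'.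
Proof. by case: b => /=; [move=> -> -> | apply: h_min_unique | apply: h_min_unique]. Qed.

Lemma h_min_const detm fs d : h_min ev detm fs (fun=> [:: d]) 0.
Proof.
split=> //; exists [:: Leaf Att d]; split=> //.
do 3 split=> //; first by move=> t [<-|].
rewrite paths1; split; last by move=> xi delta /= [<-|] // _; rewrite inE.
by move=> delta [x ->]; exists ([::], d); split; [left | exists x; split].
Qed.

Lemma problem_head_nu fs nu x : problem fs nu ->
  head 0 (nu (rowof ev fs x)) \in nu (rowof ev fs x).
Proof.
case=> _ /(_ (rowof ev fs x)); rewrite size_map.
by case: (nu _) => [/(_ erefl)|d s _] //; rewrite inE eqxx.
Qed.

Lemma rowof_eq fs x y :
  rowof ev fs x = rowof ev fs y <-> forall f, List.In f fs -> ev f x = ev f y.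
Proof. exact (@List.map_ext_in_iff _ _ (ev^~ x) (ev^~ y) fs). Qed.

Section Deciding.
Variables (fs : seq Att) (nu : seq bool -> seq nat).
Hypothesis fs_nu : problem fs nu.

Definition decides (C : X -> Prop) t D :=
  [/\ node_ok (fun f => List.In f fs) true t,
      forall p, List.In p (npaths t) -> size p.1 <= D,
      forall x, C x -> exists2 p, List.In p (npaths t) & sat ev x p.1
    & forall p x, List.In p (npaths t) -> C x -> sat ev x p.1 ->
        p.2 \in nu (rowof ev fs x)].

Lemma decides_leaf C D :
  (forall x y, C x -> C y -> rowof ev fs x = rowof ev fs y) -> exists t, decides C t D.
Proof.
move=> same_row; case: (pselect (exists x, C x)) => [[x0 Cx0]|noC].
  exists (Leaf Att (head 0 (nu (rowof ev fs x0)))); split=> //.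
  - by move=> p [<-|].
  - by move=> x Cx; exists ([::], head 0 (nu (rowof ev fs x0))); [left|].
  by move=> p x [<-|] // Cx _; rewrite (same_row x x0) //; apply: problem_head_nu.
exists (Leaf Att 0); split=> //; first by move=> p [<-|].
- by move=> x Cx; case: noC; exists x.
by move=> p x _ Cx; case: noC; exists x.
Qed.

Lemma decides_Node C g t0 t1 D : List.In g fs ->
  decides (fun x => C x /\ ev g x = false) t0 D ->
  decides (fun x => C x /\ ev g x = true) t1 D ->
  decides C (Node g [:: (false, t0); (true, t1)]) D.+1.
Proof.
move=> g_fs [ok0 le0 cover0 correct0] [ok1 le1 cover1 correct1]; split.
- by apply/node_ok_Node; split=> // bc [<-|[<-|]].
- move=> p /In_npaths_Node [bc [q [bc_ch q_bc ->]]] /=; rewrite ltnS.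
  by case: bc_ch q_bc => [<-|[<-|]] //; [apply: le0 | apply: le1].
- move=> x Cx; case E: (ev g x).
    have [q q_t1 sat_q] := cover1 x (conj Cx E).
    exists (cons_edge g true q); last by apply/sat_cons.
    by apply/In_npaths_Node; exists (true, t1), q; split=> //; right; left.
  have [q q_t0 sat_q] := cover0 x (conj Cx E).
  exists (cons_edge g false q); last by apply/sat_cons.
  by apply/In_npaths_Node; exists (false, t0), q; split=> //; left.
move=> p x /In_npaths_Node [bc [q [bc_ch q_bc ->]]] Cx /sat_cons [E sat_q].
case: bc_ch q_bc E => [<-|[<-|]] // q_t E.
  exact: correct0 q_t (conj Cx E) sat_q.
exact: correct1 q_t (conj Cx E) sat_q.
Qed.

Lemma decides_is_tree t D : decides (fun=> True) t D ->
  is_tree_for ev true fs nu [:: t] /\ depth [:: t] <= D.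
Proof.
move=> [ok le_D cover correct]; split; last by apply: depth_le; rewrite paths1.
do 3 split=> //; first by move=> t' [<-|].
rewrite paths1; split; last by move=> xi delta xi_t [x [-> sat_x]]; apply: correct.
by move=> delta [x ->]; have [p p_t sat_p] := cover x I; exists p; split=> //; exists x.
Qed.

End Deciding.

Definition chain (p : seq (Att * bool)) (d : nat) : dnode Att :=
  foldr (fun fb t => Node fb.1 [:: (fb.2, t)]) (Leaf Att d) p.

Lemma npaths_chain p d : npaths (chain p d) = [:: (p, d)].
Proof. by elim: p => //= [[f b] p] /= ->. Qed.

Lemma node_ok_chain (P : Att -> Prop) p d :
  (forall fb, List.In fb p -> P fb.1) -> node_ok P false (chain p d).
Proof.
elim: p => //= [[f b] p] IH P_p; split; first by apply: (P_p (f, b)); left.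
by do 2 split=> //; split=> //; apply: IH => fb fb_p; apply: P_p; right.
Qed.

Definition rules_tree (rules : seq (seq (Att * bool) * nat)) : dtree Att :=
  [seq chain r.1 r.2 | r <- rules].

Lemma paths_rules_tree rules : paths (rules_tree rules) = rules.
Proof.
by elim: rules => //= r rules; rewrite /paths /= npaths_chain -surjective_pairing => ->.
Qed.

Lemma rules_tree_is_tree fs nu rules D :
  rules <> [::] ->
  (forall r, List.In r rules ->
     [/\ forall fb, List.In fb r.1 -> List.In fb.1 fs, size r.1 <= D
       & forall x, sat ev x r.1 -> r.2 \in nu (rowof ev fs x)]) ->
  (forall x, exists2 r, List.In r rules & sat ev x r.1) ->
  is_tree_for ev false fs nu (rules_tree rules) /\ depth (rules_tree rules) <= D.
Proof.
move=> rules_nil rule_ok cover.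
split; last by apply: depth_le => r; rewrite paths_rules_tree => /rule_ok [].
split; first by case: (rules) rules_nil.
split=> //; split.
  move=> t /List.in_map_iff [r [<- /rule_ok [attr_fs _ _]]].
  exact: node_ok_chain.
rewrite paths_rules_tree; split.
  by move=> delta [x ->]; have [r ? ?] := cover x; exists r; split; last exists x.
by move=> r delta /rule_ok [_ _ valid] [x [-> /valid]].
Qed.

End DecisionTreeFacts.

(** * Decision trees over U_3 *)

Lemma F3_threshold_exists (f : F3) : exists j, proj1_sig f j.+1.
Proof. by case: f => g /= g_F3; case: g_F3 => i [_ ->]; exists i; rewrite /l. Qed.

Definition thr (f : F3) : nat := ex_minn (F3_threshold_exists f).

Lemma ev3_thr f x : ev3 f x = (thr f < x).
Proof.
rewrite /thr; case: ex_minnP => m; case: f => g /= g_F3.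
case: g_F3 => i [_ g_def]; subst g; rewrite /ev3 /l /= => lt_im min_m.
by have /min_m le_mi : i < i.+1 by []; have -> : m = i by lia.
Qed.

Lemma seq_nat_pivot (s : seq nat) m : s <> [::] -> size s < 2 ^ m.+1 ->
  exists2 v, v \in s
    & count (fun t => t < v) s < 2 ^ m /\ count (fun t => v < t) s < 2 ^ m.
Proof.
rewrite expnS; move: (expn_gt0 2 m) => /= M_pos; move: (2 ^ m) M_pos => M M_pos.
move=> s_nil size_s; have size_pos : 0 < size s by case: s s_nil size_s.
(* The pivot is the least [v] with more than [size s - M] values [<= v]. *)
have has_K : exists v, size s - M < count (leq^~ v) s.
  exists (\max_(t <- s) t).
  have /eqP -> : count (leq^~ (\max_(t <- s) t)) s == size s.
    by rewrite -all_count; apply/allP => t t_s; apply: leq_bigmax_seq.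
  lia.
case: (ex_minnP has_K) => v gt_K min_v.
have le_K : count (fun t => t < v) s <= size s - M.
  case: v gt_K min_v => [|v] _ min_v.
    by rewrite (eq_count (a2 := pred0)) ?count_pred0.
  by rewrite leqNgt; apply/negP => /min_v; rewrite ltnn.
exists v.
  apply/negPn/negP => v_s; move: gt_K.
  rewrite (@eq_in_count _ _ (fun t => t < v)) ?ltnNge ?le_K //.
  by move=> t t_s /=; rewrite leq_eqVlt; case: eqP => // t_v; move: v_s; rewrite -t_v t_s.
have := count_predC (leq^~ v) s.
rewrite (eq_count (a1 := predC _) (a2 := fun t => v < t)); last first.
  by move=> t /=; rewrite -ltnNge.
move: size_s le_K gt_K; lia.
Qed.

Lemma In_of_in_map (T : Type) (h : T -> nat) (s : seq T) v :
  v \in map h s -> exists2 x, List.In x s & h x = v.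
Proof.
elim: s => //= x s IH; rewrite inE => /orP [/eqP ->|/IH [y y_s <-]].
  by exists x; [left|].
by exists y; [right|].
Qed.

(* After querying [g] with answer [b], only the attributes with thresholds
   strictly on the [b]-side of [thr g] can still distinguish points. *)
Definition beyond (g : F3) (b : bool) (f : F3) :=
  if b then thr g < thr f else thr f < thr g.

Lemma ev3_not_beyond g b f x y : ev3 g x = b -> ev3 g y = b -> ~~ beyond g b f ->
  ev3 f x = ev3 f y.
Proof.
rewrite /beyond !ev3_thr.
by case: b => [gx gy|/negbT gx /negbT gy] not_beyond; apply/idP/idP; lia.
Qed.

Section BinarySearch.
Variables (fs : seq F3) (nu : seq bool -> seq nat).
Hypothesis fs_nu : problem fs nu.

(* [L] lists the attributes that may still separate the rows of [C]. *)
Lemma binary_search m (C : nat -> Prop) (L : seq F3) :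
  (forall f, List.In f L -> List.In f fs) -> size L < 2 ^ m ->
  (forall x y, C x -> C y -> (forall f, List.In f L -> ev3 f x = ev3 f y) ->
     rowof ev3 fs x = rowof ev3 fs y) ->
  exists t, decides ev3 fs nu C t m.
Proof.
elim: m C L => [|m IH] C L L_fs size_L L_sep.
  apply: decides_leaf => // x y Cx Cy; apply: L_sep => //.
  by case: L {L_fs} size_L.
case: L L_fs size_L L_sep => [|f0 L0] L_fs size_L L_sep.
  by apply: decides_leaf => // x y Cx Cy; apply: L_sep.
set L := f0 :: L0 in L_fs size_L L_sep.
have [v /In_of_in_map [g g_L <-] [size_lo size_hi]] :=
  @seq_nat_pivot (map thr L) m ltac:(by []) ltac:(by rewrite size_map).
have branch b : exists t, decides ev3 fs nu (fun x => C x /\ ev3 g x = b) t m.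
  apply: (IH _ (filter (beyond g b) L)) => [f||].
  - by move=> /(List.filter_In (beyond g b) f L) [/L_fs].
  - rewrite size_filter; move: size_lo size_hi; rewrite !count_map.
    by case: b => lo hi; [exact: hi | exact: lo].
  move=> x y [Cx gx] [Cy gy] sep; apply: L_sep => // f f_L.
  case: (boolP (beyond g b f)) => [f_beyond|]; last exact: ev3_not_beyond.
  by apply: sep; apply/(List.filter_In (beyond g b) f L).
have [[t0 t0_dec] [t1 t1_dec]] := (branch false, branch true).
by exists (Node g [:: (false, t0); (true, t1)]); apply: decides_Node => //; apply: L_fs.
Qed.

Lemma hd_exists : exists m, h_min ev3 true fs nu m.
Proof.
apply: h_min_exists.
have [t /(decides_is_tree) [t_tree _]] :=
  @binary_search (size fs) (fun=> True) fs (fun f f_fs => f_fs) (ltn_expl _ (ltnSn 1))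
    (fun x y _ _ => proj2 (rowof_eq ev3 fs x y)).
by exists [:: t].
Qed.

Lemma hd_le_log m w : size fs < 2 ^ m -> h_min ev3 true fs nu w -> w <= m.
Proof.
move=> size_fs w_min.
have [t /(decides_is_tree) [t_tree depth_t]] :=
  @binary_search m (fun=> True) fs (fun f f_fs => f_fs) size_fs
    (fun x y _ _ => proj2 (rowof_eq ev3 fs x y)).
exact: leq_trans (h_min_le w_min t_tree) depth_t.
Qed.

Lemma hd_le_size w : h_min ev3 true fs nu w -> w <= size fs.
Proof. by apply: hd_le_log; apply: ltn_expl. Qed.

End BinarySearch.

Lemma exists_extremum (T : Type) (r : rel nat) (h : T -> nat) (P : pred T) (s : seq T) :
  total r -> transitive r -> (exists2 f, List.In f s & P f) ->
  exists g, [/\ List.In g s, P g & forall f, List.In f s -> P f -> r (h f) (h g)].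
Proof.
move=> r_total r_trans; elim: s => [|x s IH] [f /= f_s Pf] //.
have r_refl n : r n n by case/orP: (r_total n n).
case: (pselect (exists2 f, List.In f s & P f)) => [/IH [g [g_s Pg g_max]]|no_f].
  case: (boolP (P x && r (h g) (h x))) => [/andP [Px gx]|not_x].
    exists x; split=> [||f' [<-|f'_s Pf']] //; first by left.
    exact: r_trans (g_max f' f'_s Pf') gx.
  exists g; split=> [||f' [<-|f'_s]] //; [by right | move=> Px | exact: g_max].
  by move: not_x; rewrite Px /=; case/orP: (r_total (h g) (h x)) => ->.
have Px : P x by case: f_s Pf => [-> //|f_s Pf]; case: no_f; exists f.
exists x; split=> [||f' [<-|f'_s Pf']] //; first by left.
by case: no_f; exists f'.
Qed.

Section NondeterministicRules.
Variables (fs : seq F3) (nu : seq bool -> seq nat).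
Hypothesis fs_nu : problem fs nu.

Lemma lower_guard x : exists p : seq (F3 * bool),
  [/\ size p <= 1, forall fb, List.In fb p -> List.In fb.1 fs
    & forall y, sat ev3 y p <-> forall f, List.In f fs -> thr f < x -> thr f < y].
Proof.
case: (pselect (exists2 f, List.In f fs & thr f < x)) => [below_x|none]; last first.
  exists [::]; split=> // y; split=> [_ f f_fs fx|_ q []].
  by case: none; exists f.
have [g [g_fs gx g_max]] := exists_extremum thr leq_total (@leq_trans) below_x.
exists [:: (g, true)]; split=> [||y] //; first by move=> fb [<-|].
rewrite sat_cons ev3_thr; split=> [[gy _] f f_fs fx|below].
  exact: leq_ltn_trans (g_max f f_fs fx) gy.
by split=> //; apply: below.
Qed.

Lemma upper_guard x : exists p : seq (F3 * bool),
  [/\ size p <= 1, forall fb, List.In fb p -> List.In fb.1 fs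
    & forall y, sat ev3 y p <-> forall f, List.In f fs -> x <= thr f -> y <= thr f].
Proof.
case: (pselect (exists2 f, List.In f fs & x <= thr f)) => [above_x|none]; last first.
  exists [::]; split=> // y; split=> [_ f f_fs fx|_ q []].
  by case: none; exists f.
have geq_total : total geq by move=> m n; apply: leq_total.
have geq_trans : transitive geq by move=> m n p le_mn le_pm; apply: leq_trans le_pm le_mn.
have [g [g_fs gx g_min]] := exists_extremum thr geq_total geq_trans above_x.
exists [:: (g, false)]; split=> [||y] //; first by move=> fb [<-|].
rewrite sat_cons ev3_thr; split=> [[/negbT gy _] f f_fs xf|above].
  by rewrite -leqNgt in gy; apply: leq_trans gy (g_min f f_fs xf).
by split=> //; apply/negbTE; rewrite -leqNgt; apply: above.
Qed.

(* The points with the row of [x] form the interval bounded by the nearest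
   thresholds on either side of [x]. *)
Lemma row_rule x : exists p : seq (F3 * bool),
  [/\ size p <= 2, forall fb, List.In fb p -> List.In fb.1 fs
    & forall y, sat ev3 y p <-> rowof ev3 fs y = rowof ev3 fs x].
Proof.
have [lo [size_lo lo_fs lo_sat]] := lower_guard x.
have [hi [size_hi hi_fs hi_sat]] := upper_guard x.
exists (lo ++ hi); split; first by rewrite size_cat; lia.
  by move=> fb /List.in_app_iff [/lo_fs|/hi_fs].
move=> y; rewrite sat_cat lo_sat hi_sat; split.
  move=> [below above]; apply/rowof_eq => f f_fs; rewrite !ev3_thr.
  case: (ltnP (thr f) x) => [/(below f f_fs) -> //|/(above f f_fs)].
  by rewrite leqNgt => /negbTE.
move=> /rowof_eq same; split=> f f_fs; have := same f f_fs; rewrite !ev3_thr.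
  by move=> ->.
by move=> same_f; rewrite leqNgt => /negbTE x_le; rewrite leqNgt same_f x_le.
Qed.

Lemma thr_bounded : exists M, forall f, List.In f fs -> thr f <= M.
Proof.
elim: fs => [|f fs' [M M_max]]; first by exists 0.
exists (maxn (thr f) M) => g [<-|/M_max]; first exact: leq_maxl.
by move/leq_trans; apply; apply: leq_maxr.
Qed.

(* Beyond the largest threshold [M] all points share one row, so the rules
   of the points [0 .. M.+1] cover everything. *)
Lemma ha_tree : exists G, is_tree_for ev3 false fs nu G /\ depth G <= 2.
Proof.
have [M M_max] := thr_bounded.
pose rule x := sval (cid (row_rule x)).
have rule_spec x : _ := svalP (cid (row_rule x)).
pose rules := [seq (rule x, head 0 (nu (rowof ev3 fs x))) | x <- iota 0 M.+2].
exists (rules_tree rules); apply: rules_tree_is_tree => //.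
- move=> r /(@List.in_map_iff _ _ _ (iota 0 M.+2) r) [x [<- _]] /=.
  have [size_r r_fs r_sat] := rule_spec x.
  by split=> // y /r_sat ->; apply: problem_head_nu.
move=> y; pose x := minn y M.+1.
have same_row : rowof ev3 fs y = rowof ev3 fs x.
  apply/rowof_eq => f /M_max le_M; rewrite !ev3_thr /x; case: (leqP y M.+1) => //; lia.
exists (rule x, head 0 (nu (rowof ev3 fs x))); last by have [_ _ ->] := rule_spec x.
apply/(@List.in_map_iff _ _ _ (iota 0 M.+2)); exists x; split=> //.
by apply/(List.in_seq M.+2 0 x); rewrite /x; lia.
Qed.

Lemma ha_exists : exists m, h_min ev3 false fs nu m.
Proof. by apply: h_min_exists; have [G [G_tree _]] := ha_tree; exists G. Qed.

Lemma ha_le_2 m : h_min ev3 false fs nu m -> m <= 2.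
Proof.
by move=> m_min; have [G [G_tree /(leq_trans (h_min_le m_min G_tree))]] := ha_tree.
Qed.

End NondeterministicRules.

(** * The entries of t_3 *)

Definition attr (i : nat) : F3 :=
  exist _ (l i.+1) (ex_intro _ i.+1 (conj (ltn0Sn i) erefl)).

Definition const_table (N : nat) : seq F3 := nseq N (attr 0).

Lemma hval_const_table b N :
  hval ev3 b (const_table N) (fun=> [:: 0]) (if b is HI then N else 0).
Proof. by case: b => /=; [rewrite size_nseq | apply: h_min_const ..]. Qed.

Lemma Sset_const_table b c n N : 0 < N -> (if c is HI then N else 0) <= n ->
  Sset ev3 b c n (if b is HI then N else 0).
Proof.
move=> N_pos hc_le; exists (const_table N), (fun=> [:: 0]); split.
  by split=> //; case: N N_pos hc_le.
split; first exact: hval_const_table.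
by exists (if c is HI then N else 0); split=> //; apply: hval_const_table.
Qed.

Definition count_table (k : nat) : seq F3 := map attr (iota 0 k).
Definition count_ones (delta : seq bool) : seq nat := [:: count id delta].

Lemma problem_count_table k : 0 < k -> problem (count_table k) count_ones.
Proof. by case: k. Qed.

Lemma size_count_table k : size (count_table k) = k.
Proof. by rewrite size_map size_iota. Qed.

Lemma count_ones_row k j : j <= k -> count id (rowof ev3 (count_table k) j.+1) = j.
Proof.
move=> le_jk; rewrite /rowof /count_table -map_comp count_map.
rewrite (eq_count (a2 := fun i => i < j)); last by move=> i /=; rewrite /l ltnS.
rewrite -(subnKC le_jk) iotaD count_cat add0n.
rewrite (@eq_in_count _ _ predT (iota 0 j)); last by move=> i; rewrite mem_iota.
rewrite (@eq_in_count _ _ pred0 (iota j (k - j))); last first.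
  by move=> i; rewrite mem_iota => /andP [le_ji _]; apply/negbTE; rewrite -leqNgt.
by rewrite count_predT count_pred0 size_iota addn0.
Qed.

Lemma in_map_snd (T : Type) (s : seq (T * nat)) p : List.In p s -> p.2 \in map snd s.
Proof. by elim: s => //= q s IH [->|/IH]; rewrite inE ?eqxx // => ->; rewrite orbT. Qed.

(* The points [1, ..., k.+1] need the [k.+1] distinct decisions [0, ..., k],
   each of which labels a complete path. *)
Lemma count_table_depth k G :
  is_tree_for ev3 true (count_table k) count_ones G -> k < 2 ^ depth G.
Proof.
case=> _ [/(_ erefl) size_G [G_ok [cover correct]]].
case: G size_G G_ok cover correct => [|t [|//]] // _ G_ok cover correct.
apply: leq_trans (size_npaths_det (G_ok t (or_introl erefl)) _); last first.
  by move=> p p_t; apply: depth_ge; rewrite paths1.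
rewrite -(size_map snd) -(size_iota 0 k.+1); apply: uniq_leq_size; first exact: iota_uniq.
move=> j; rewrite mem_iota add0n ltnS => le_jk.
have [xi [xi_t xi_row]] := cover _ (ex_intro _ j.+1 erefl).
move: (correct xi _ xi_t xi_row); rewrite /count_ones count_ones_row // inE => /eqP <-.
by apply: in_map_snd; rewrite -paths1.
Qed.

Lemma hd_count_table k w : h_min ev3 true (count_table k) count_ones w -> k < 2 ^ w.
Proof. by case=> [[G [G_tree <-]] _]; apply: count_table_depth. Qed.

Lemma Sset_count_table c n k w : 0 < k ->
  h_min ev3 true (count_table k) count_ones w ->
  (exists m, hval ev3 c (count_table k) count_ones m /\ m <= n) ->
  Sset ev3 HD c n w.
Proof.
move=> k_pos w_min hc; exists (count_table k), count_ones.
by split; first exact: problem_count_table.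
Qed.

Lemma Sset_diag_le b n w : Sset ev3 b b n w -> w <= n.
Proof. by move=> [fs [nu [_ [hw [m [hm le_mn]]]]]]; rewrite (hval_unique hw hm). Qed.

Lemma Ufun_of_max b c n v :
  Sset ev3 b c n v -> (forall w, Sset ev3 b c n w -> w <= v) -> Ufun ev3 b c n v.
Proof. by move=> Sv v_max; split; [exists v | split; [exists v.+1 | split]]. Qed.

Lemma Dom_Ufun b c n B : (exists w, Sset ev3 b c n w) ->
  (forall w, Sset ev3 b c n w -> w <= B) -> Dom (Ufun ev3 b c) n.
Proof.
move=> [w0 Sw0] le_B; have has_w : exists w, `[< Sset ev3 b c n w >].
  by exists w0; apply/asboolP.
have bounded w : `[< Sset ev3 b c n w >] -> w <= B by move/asboolP/le_B.
case: (ex_maxnP has_w bounded) => v /asboolP Sv v_max.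
by exists v; apply: Ufun_of_max => // w /asboolP /v_max.
Qed.

Lemma has_typ_eps_of_unbounded b c N :
  (forall n, N <= n -> forall B, exists2 w, Sset ev3 b c n w & B < w) ->
  has_typ (Ufun ev3 b c) Teps.
Proof.
move=> unbounded; exists N => n [v [_ [[B le_B] _]]].
by rewrite ltnNge; apply/negP => /unbounded /(_ B) [w /le_B]; lia.
Qed.

Lemma lt_pow2_pred n : 3 <= n -> n < 2 ^ n.-1.
Proof.
by case: n => [|[|[|k]]] // _; have := ltn_expl k (ltnSn 1); rewrite !expnS; lia.
Qed.

Lemma has_typ_Uii : has_typ (Ufun ev3 HI HI) Tgamma.
Proof.
apply: has_typ_gamma_of_id => n n_pos.
by apply: Ufun_of_max; [apply: Sset_const_table | apply: Sset_diag_le].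
Qed.

Lemma has_typ_Ui_eps c : c <> HI -> has_typ (Ufun ev3 HI c) Teps.
Proof.
move=> c_HI; apply: (@has_typ_eps_of_unbounded _ _ 0) => n _ B.
by exists B.+1 => //; apply: Sset_const_table; case: c c_HI.
Qed.

Lemma Sset_di_le n w : Sset ev3 HD HI n w -> w <= n.
Proof.
move=> [fs [nu [fs_nu [/= hw [m [/= -> le_mn]]]]]].
exact: leq_trans (hd_le_size fs_nu hw) le_mn.
Qed.

Lemma Sset_di_lt n w : 3 <= n -> Sset ev3 HD HI n w -> w < n.
Proof.
move=> n_ge3 [fs [nu [fs_nu [/= hw [m [/= m_size le_mn]]]]]].
have size_fs : size fs < 2 ^ n.-1.
  by rewrite -m_size; apply: leq_ltn_trans le_mn (lt_pow2_pred n_ge3).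
by have := hd_le_log fs_nu size_fs hw; lia.
Qed.

Lemma has_typ_Udi : has_typ (Ufun ev3 HD HI) Tbeta.
Proof.
have Dom_di n : 0 < n -> Dom (Ufun ev3 HD HI) n.
  move=> n_pos; apply: (@Dom_Ufun _ _ _ n); last exact: Sset_di_le.
  by exists 0; apply: (@Sset_const_table _ _ _ 1).
split; first by move=> m; exists m.+1; split=> //; apply: Dom_di.
split.
  exists 3 => n [v [[_ [_ [Sv _]]] le_nv]].
  by rewrite ltnNge; apply/negP => /Sset_di_lt /(_ Sv); lia.
move=> [B le_B]; have pow_pos := expn_gt0 2 B.
have [w w_min] := hd_exists (problem_count_table pow_pos).
have [v Uv] := Dom_di _ pow_pos; have [_ [_ [_ v_max]]] := Uv.
have Sw : Sset ev3 HD HI (2 ^ B) w.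
  by apply: Sset_count_table w_min _ => //; exists (2 ^ B); rewrite /= size_count_table.
have := hd_count_table w_min; rewrite ltn_exp2l // => lt_Bw.
by have := le_B _ _ Uv; have := v_max _ Sw; lia.
Qed.

Lemma has_typ_Udd : has_typ (Ufun ev3 HD HD) Tgamma.
Proof.
apply: has_typ_gamma_of_id => n n_pos.
have k_pos : 0 < (2 ^ n).-1 by rewrite -ltnS prednK ?expn_gt0 // -{1}(expn0 2) ltn_exp2l.
have [w w_min] := hd_exists (problem_count_table k_pos).
have w_n : w = n.
  apply/eqP; rewrite eqn_leq; apply/andP; split.
    apply: (hd_le_log (problem_count_table k_pos)) w_min.
    by rewrite size_count_table prednK ?expn_gt0.
  by have := hd_count_table w_min; rewrite prednK ?expn_gt0 // leq_exp2l.
apply: Ufun_of_max; last exact: Sset_diag_le.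
by subst w; apply: Sset_count_table (w_min) _ => //; exists n.
Qed.

Lemma has_typ_Uda : has_typ (Ufun ev3 HD HA) Teps.
Proof.
apply: (@has_typ_eps_of_unbounded _ _ 2) => n le_2n B; have pow_pos := expn_gt0 2 B.
have [w w_min] := hd_exists (problem_count_table pow_pos).
have [m m_min] := ha_exists (problem_count_table pow_pos).
exists w; last by have := hd_count_table w_min; rewrite ltn_exp2l.
apply: Sset_count_table w_min _ => //; exists m; split=> //.
exact: leq_trans (ha_le_2 (problem_count_table pow_pos) m_min) le_2n.
Qed.

Lemma has_typ_Ua c : has_typ (Ufun ev3 HA c) Talpha.
Proof.
have le_2 n w : Sset ev3 HA c n w -> w <= 2.
  by move=> [fs [nu [fs_nu [hw _]]]]; apply: ha_le_2 hw.
split; last by exists 2 => n v [_ [_ [/le_2]]].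
move=> m; exists m.+1; split=> //; apply: (@Dom_Ufun _ _ _ 2); last exact: le_2.
by exists 0; apply: (@Sset_const_table _ _ _ 1); case: c {le_2}.
Qed.

Lemma has_typ_t3 b c : has_typ (Ufun ev3 b c) (t3 b c).
Proof.
case: b; case: c => /=;
  by [ apply: has_typ_Uii | apply: has_typ_Ui_eps | apply: has_typ_Udi
     | apply: has_typ_Udd | apply: has_typ_Uda | apply: has_typ_Ua ].
Qed.

Theorem lemma11 :
  forall (b c : hkind) (t : typ),
    has_typ (Ufun ev3 b c) t <-> t = t3 b c.
Proof.
move=> b c t; split=> [t_typ | ->]; last exact: has_typ_t3.
exact: has_typ_unique t_typ (has_typ_t3 b c).
Qed.
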